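(* For all integers $n,m \geq 1$ with $n+m \geq 3$: ${\rm ML}^{\rm W}(K_{n,m})=0$ if $n \neq m$, and ${\rm ML}^{\rm W}(K_{n,m})=2n-2$ if $n=m \geq 2$.
   Context: $K_{n,m}$ is the complete bipartite graph with parts of sizes $n$ and $m$. A walk of a graph $G$ is a sequence of vertices $u_0u_1\dots u_p$ with $u_tu_{t+1}\in E(G)$ for all $t$ (vertices and edges may repeat); its length is $p$. For a walk $W$ of $G$, $G+W$ is the multigraph on $V(G)$ whose edge multiset consists of $E(G)$ together with each edge added as many times as $W$ traverses it. A multigraph is locally irregular if no two adjacent vertices have the same degree; a walk is irregularising if $G+W$ is locally irregular. ${\rm ML}^{\rm W}(G)$ denotes the minimum length of an irregularising walk of $G$, where the trivial walk consisting of a single vertex (length $0$) is allowed. *)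

From mathcomp Require Import all_boot.
Set Implicit Arguments. Unset Strict Implicit. Unset Printing Implicit Defensive.

Section Walks.
Variables (T : finType) (e : rel T).

Definition is_walk (w : seq T) : bool :=
  if w is x :: s then path e x s else false.

Definition walk_len (w : seq T) : nat := (size w).-1.

Definition walk_steps (w : seq T) : seq (T * T) := zip w (behead w).

Definition gdeg (v : T) : nat := #|[pred u | e v u]|.

(* degree of v in the multigraph G + W : each traversal of an edge incident
   to v adds one (an edge uv traversed at step t contributes to both ends) *)
Definition walk_deg (w : seq T) (v : T) : nat :=
  gdeg v + \sum_(st <- walk_steps w) ((st.1 == v) + (st.2 == v)).

(* G + W is locally irregular: adjacent vertices (adjacency of G+W is that of G)
   have different degrees *)
Definition irregularising (w : seq T) : bool :=
  is_walk w && [forall u, forall v, e u v ==> (walk_deg w u != walk_deg w v)].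

Definition MLW_is (k : nat) : Prop :=
  (exists w, irregularising w /\ walk_len w = k) /\
  (forall w, irregularising w -> k <= walk_len w).

End Walks.

Definition Kbip (n m : nat) : rel ('I_n + 'I_m)%type :=
  fun x y => match x, y with
             | inl _, inr _ => true
             | inr _, inl _ => true
             | _, _ => false
             end.
Arguments Kbip n m : clear implicits.

From mathcomp Require Import all_boot zify.
Set Implicit Arguments. Unset Strict Implicit. Unset Printing Implicit Defensive.

(* If n <> m, K_{n,m} is already locally irregular: every edge joins a vertex
   of degree m to one of degree n.  If n = m all degrees equal n, so an
   irregularising walk must visit a whole side (an unvisited left vertex and an
   unvisited right vertex would be adjacent of equal degree); since the walk
   alternates sides, it then has at least 2n - 1 vertices.  Conversely, the walk
   bouncing between one right "hub" and the n left vertices, each visited once,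
   lifts the hub to degree 3n - 2 and the left vertices to n + 1 or n + 2, while
   the other right vertices keep degree n. *)

Section WalkDegree.
Variables (T : finType) (e : rel T).

Lemma walk_deg_count x s v :
  walk_deg e (x :: s) v + (x == v) + (last x s == v) =
  gdeg e v + 2 * count_mem v (x :: s).
Proof.
rewrite /walk_deg /walk_steps; elim: s x => [|y s IHs] x /=.
  by rewrite big_nil; lia.
by rewrite big_cons /=; have := IHs y; rewrite /=; lia.
Qed.

Lemma walk_deg_notin w v : v \notin w -> walk_deg e w v = gdeg e v.
Proof.
case: w => [|x s] v_notin; first by rewrite /walk_deg big_nil addn0.
have : gdeg e v <= walk_deg e (x :: s) v by exact: leq_addr.
have := walk_deg_count x s v; move/count_memPn: v_notin => ->.
by move: (walk_deg e _ v) => d; lia.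
Qed.

Lemma walk_deg1 x v : walk_deg e [:: x] v = gdeg e v.
Proof. by rewrite /walk_deg big_nil addn0. Qed.

End WalkDegree.

Section AlternatingWalks.
Variables (T : finType) (e : rel T) (P : pred T).
Hypothesis e_switches : forall x y, e x y -> P y = ~~ P x.

Lemma count_path_alternating x s :
  path e x s -> count P (x :: s) <= count (predC P) (x :: s) + P x.
Proof.
elim: s x => [|y s IHs] x /=; first by case: (P x).
case/andP=> /e_switches Py /IHs /=; rewrite Py.
by case: (P x) => /=; lia.
Qed.

Lemma card_le_count (w : seq T) : {subset P <= w} -> #|P| <= count P w.
Proof.
move=> P_sub_w; rewrite -size_filter; apply: leq_trans (card_size _).
apply/subset_leq_card/subsetP=> v Pv.
by rewrite mem_filter; apply/andP; split; [exact: Pv | exact: P_sub_w].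
Qed.

Lemma size_path_covering x s :
  path e x s -> {subset P <= x :: s} -> #|P|.*2 <= (size s).+2.
Proof.
move=> xs_path /card_le_count P_le.
have := count_path_alternating xs_path; have := count_predC P (x :: s).
by move: P_le; rewrite /=; case: (P x) => /=; lia.
Qed.

End AlternatingWalks.

Definition is_left n m (u : 'I_n + 'I_m) : bool :=
  if u is inl _ then true else false.

Section CompleteBipartite.
Variables n m : nat.
Local Notation K := (Kbip n m).

Lemma Kbip_switches x y : K x y -> @is_left n m y = ~~ is_left x.
Proof. by case: x => ?; case: y. Qed.

Lemma Kbip_switches_right x y :
  K x y -> predC (@is_left n m) y = ~~ predC (@is_left n m) x.
Proof. by case: x => ?; case: y. Qed.

Lemma card_is_left : #|@is_left n m| = n.
Proof.
rewrite -sum1_card big_sumType /= [X in _ + X]big_pred0 // addn0.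
by rewrite (eq_bigl xpredT) // sum1_card card_ord.
Qed.

Lemma card_is_right : #|predC (@is_left n m)| = m.
Proof.
rewrite -sum1_card big_sumType /= [X in X + _]big_pred0 // add0n.
by rewrite (eq_bigl xpredT) // sum1_card card_ord.
Qed.

Lemma gdeg_Kbip_left i : gdeg K (inl i) = m.
Proof. by rewrite /gdeg -[RHS]card_is_right; apply: eq_card => -[]. Qed.

Lemma gdeg_Kbip_right j : gdeg K (inr j) = n.
Proof. by rewrite /gdeg -[RHS]card_is_left; apply: eq_card => -[]. Qed.

Lemma Kbip_irregularising w :
  is_walk K w -> (forall i j, walk_deg K w (inl i) != walk_deg K w (inr j)) ->
  irregularising K w.
Proof.
move=> w_walk deg_neq; rewrite /irregularising w_walk.
by apply/forallP=> -[i|j]; apply/forallP=> -[i'|j'] //=; rewrite // eq_sym.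
Qed.

End CompleteBipartite.

Lemma Kbip_irregularising_covers_side n w :
  irregularising (Kbip n n) w ->
  {subset @is_left n n <= w} \/ {subset predC (@is_left n n) <= w}.
Proof.
case/andP=> _ /forallP deg_neq.
have [left_in | /forallPn[i /= i_notin]] := boolP [forall i, inl i \in w].
  by left=> -[i|//] _; apply: (forallP left_in).
right=> -[//|j] _; apply/negPn/negP=> j_notin.
have := implyP (forallP (deg_neq (inl i)) (inr j)) isT.
by rewrite !walk_deg_notin // gdeg_Kbip_left gdeg_Kbip_right eqxx.
Qed.

Lemma Kbip_irregularising_len n w :
  irregularising (Kbip n n) w -> 2 * n - 2 <= walk_len w.
Proof.
move=> w_irr; have := Kbip_irregularising_covers_side w_irr.
case/andP: w_irr; case: w => [|x s] //= xs_path _.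
case=> [left_sub | right_sub].
- have := size_path_covering (@Kbip_switches n n) xs_path left_sub.
  by rewrite card_is_left /walk_len /=; lia.
- have := size_path_covering (@Kbip_switches_right n n) xs_path right_sub.
  by rewrite card_is_right /walk_len /=; lia.
Qed.

Section SpokeWalk.
Variables (n m : nat) (hub : 'I_m).
Local Notation K := (Kbip n m).

Definition spokes (s : seq 'I_n) : seq ('I_n + 'I_m) :=
  flatten [seq [:: inr hub; inl i] | i <- s].

Definition spoke_walk (a : 'I_n) (s : seq 'I_n) := inl a :: spokes s.

Lemma spoke_walk_is_walk a s : is_walk K (spoke_walk a s).
Proof. by rewrite /spoke_walk /=; elim: s a => [|i s IHs] a //=; apply: IHs. Qed.

Lemma walk_len_spoke_walk a s : walk_len (spoke_walk a s) = 2 * size s.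
Proof. by rewrite /walk_len /=; elim: s => [|i s IHs] //=; rewrite IHs; lia. Qed.

Lemma last_spoke_walk a s : last (inl a) (spokes s) = inl (last a s).
Proof. by elim: s a => [|i s IHs] a //=; apply: IHs. Qed.

Lemma walk_deg_spoke_walk_left a s i :
  walk_deg K (spoke_walk a s) (inl i) + (a == i) + (last a s == i) =
  m + 2 * count_mem i (a :: s).
Proof.
have := walk_deg_count K (inl a) (spokes s) (inl i).
rewrite last_spoke_walk gdeg_Kbip_left /= => ->.
by congr (_ + 2 * (_ + _)); elim: s {a} => [|j s IHs] //=; rewrite IHs.
Qed.

Lemma walk_deg_spoke_walk_right a s j :
  walk_deg K (spoke_walk a s) (inr j) = n + (hub == j) * (2 * size s).
Proof.
have := walk_deg_count K (inl a) (spokes s) (inr j).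
rewrite last_spoke_walk gdeg_Kbip_right /= add0n addn0.
have -> : count_mem (inr j) (spokes s) = (hub == j) * size s.
  by elim: s {a} => [|i s IHs] /=; rewrite ?muln0 // IHs mulnS.
by rewrite /spoke_walk; lia.
Qed.

End SpokeWalk.

Lemma Kbip_diag_irregularising_walk n (a b : 'I_n) : a != b ->
  exists2 w, irregularising (Kbip n n) w & walk_len w = 2 * n - 2.
Proof.
move=> a_neq_b; pose mids : seq 'I_n := enum [pred i | (i != a) && (i != b)].
have card_mids : size mids + 2 = n.
  rewrite -cardE -[RHS](card_ord n) -(cardC (pred2 a b)) card2 a_neq_b addnC.
  by congr (_ + _); apply: eq_card => i; rewrite !inE negb_or.
have count_mids i : count_mem i mids = (i != a) && (i != b).
  by rewrite count_uniq_mem ?enum_uniq ?mem_enum.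
exists (spoke_walk a a (rcons mids b)); last first.
  by rewrite walk_len_spoke_walk size_rcons; lia.
apply: Kbip_irregularising => [|i j]; first exact: spoke_walk_is_walk.
have := walk_deg_spoke_walk_left a a (rcons mids b) i.
rewrite walk_deg_spoke_walk_right size_rcons last_rcons /=.
rewrite -cats1 count_cat count_mids /=.
(* a left vertex outside {a, b} lies in mids, which forces n >= 3 *)
have := count_size (pred1 i) mids; rewrite count_mids.
move: (walk_deg _ _ _) => d; rewrite (eq_sym a i) (eq_sym b i).
case: (eqVneq i a) => [->|_].
  by rewrite (negbTE a_neq_b) /=; case: (a == j); lia.
by case: (eqVneq i b) => _ /=; case: (a == j); lia.
Qed.

Theorem theorem5p2 (n m : nat) :
  1 <= n -> 1 <= m -> 3 <= n + m ->
  (n != m -> MLW_is (Kbip n m) 0) /\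
  (n = m -> 2 <= n -> MLW_is (Kbip n m) (2 * n - 2)).
Proof.
move=> n_gt0 _ _; split=> [n_neq_m | <- n_ge2].
  split=> [|w _] //; exists [:: inl (Ordinal n_gt0)]; split=> //.
  apply: Kbip_irregularising => // i j.
  by rewrite !walk_deg1 gdeg_Kbip_left gdeg_Kbip_right eq_sym.
split=> [|w /Kbip_irregularising_len //].
have n1_lt_n : n.-1 < n by rewrite prednK.
have first_neq_last : Ordinal n_gt0 != Ordinal n1_lt_n by apply/eqP=> -[]; lia.
by have [w] := Kbip_diag_irregularising_walk first_neq_last; exists w.
Qed.
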